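(* Let $(R,\mathfrak m,k)$ be a commutative noetherian local ring. Let $A$ be an artinian $R$-module and $L$ an $\mathfrak m$-torsion $R$-module. Fix an integer $t\geq0$ such that $\mathfrak m^tA=\mathfrak m^{t+1}A$. Then $\operatorname{len}_R(A\otimes_RL)\leq\operatorname{len}_R(A/\mathfrak m^tA)\,\beta^R_0(L)$ and $\operatorname{len}_R(A\otimes_RL)\leq\beta^R_0(A)\,\operatorname{len}_R(L/\mathfrak m^tL)$, with the convention $0\cdot\infty=0$.
   Context: $L$ is $\mathfrak m$-torsion if every element is annihilated by some power of $\mathfrak m$; $\beta^R_0(X)=\operatorname{len}_R(k\otimes_RX)$. *)

From mathcomp Require Import all_boot all_algebra.
From Stdlib Require Import ClassicalEpsilon.
Set Implicit Arguments. Unset Strict Implicit. Unset Printing Implicit Defensive.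
Import GRing.Theory.
Local Open Scope ring_scope.

Section Defs.
Variable R : comNzRingType.

Definition subs (T : Type) (X Y : T -> Prop) := forall x, X x -> Y x.
Definition same (T : Type) (X Y : T -> Prop) := forall x, X x <-> Y x.

Definition ideal (I : R -> Prop) :=
  [/\ I 0, (forall x y, I x -> I y -> I (x + y)) & (forall r x, I x -> I (r * x))].

Definition maximal_ideal (m : R -> Prop) :=
  [/\ ideal m, ~ m 1 & forall J, ideal J -> subs m J -> same J m \/ J 1].
Definition local_with (m : R -> Prop) :=
  maximal_ideal m /\ forall J, maximal_ideal J -> same J m.
Definition noetherian_ring :=
  forall I : nat -> R -> Prop, (forall n, ideal (I n)) ->
    (forall n, subs (I n) (I n.+1)) ->
    exists n0, forall n, (n0 <= n)%N -> same (I n) (I n0).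

Definition submod (M : lmodType R) (N : M -> Prop) :=
  [/\ N 0, (forall x y, N x -> N y -> N (x + y)) & (forall r x, N x -> N (r *: x))].

Definition artinian (M : lmodType R) :=
  forall N : nat -> M -> Prop, (forall n, submod (N n)) ->
    (forall n, subs (N n.+1) (N n)) ->
    exists n0, forall n, (n0 <= n)%N -> same (N n) (N n0).

Definition prodset (M : lmodType R) (I : R -> Prop) (N : M -> Prop) : M -> Prop :=
  fun x => exists s : seq (R * M),
    (forall p, List.In p s -> I p.1 /\ N p.2) /\ x = \sum_(p <- s) p.1 *: p.2.

Fixpoint mpow (M : lmodType R) (m : R -> Prop) (t : nat) : M -> Prop :=
  match t with 0 => fun _ => True | t'.+1 => prodset m (@mpow M m t') end.

(* the ideal m^n of R (R viewed as the regular module R^o) *)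
Arguments mpow : clear implicits.
Definition ipow (m : R -> Prop) (n : nat) : R -> Prop := mpow R^o m n.

Definition mtorsion (m : R -> Prop) (M : lmodType R) :=
  forall x : M, exists n, forall r, ipow m n r -> r *: x = 0.

(* (Q, p) is the quotient M / N: p linear, surjective, with kernel N *)
Definition is_quotient (M Q : lmodType R) (p : M -> Q) (N : M -> Prop) :=
  [/\ linear p, (forall q, exists x, p x = q) & (forall x, p x = 0 <-> N x)].

(* bilinear maps and the tensor product, by its universal property *)
Definition bilinear_map (A L W : lmodType R) (f : A -> L -> W) :=
  (forall l, linear (fun a => f a l)) /\ (forall a, linear (f a)).
Definition is_tensor (A L T : lmodType R) (b : A -> L -> T) :=
  bilinear_map b /\
  forall (W : lmodType R) (f : A -> L -> W), bilinear_map f ->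
    exists g : T -> W, [/\ linear g, (forall a l, g (b a l) = f a l) &
      forall g' : T -> W, linear g' -> (forall a l, g' (b a l) = f a l) ->
        forall x, g' x = g x].

(* length of a module: supremum of lengths of strictly increasing chains
   of submodules N_0 < N_1 < ... < N_n; value in nat + {oo} (None = oo) *)
Definition has_chain (M : lmodType R) (n : nat) :=
  exists N : nat -> M -> Prop,
    (forall i, (i <= n)%N -> submod (N i)) /\
    (forall i, (i < n)%N -> subs (N i) (N i.+1) /\ exists x, N i.+1 x /\ ~ N i x).

Definition len (M : lmodType R) : option nat :=
  match excluded_middle_informative
          (exists n, has_chain M n /\ forall k, has_chain M k -> (k <= n)%N) with
  | left H => Some (proj1_sig (constructive_indefinite_description _ H))
  | right _ => None
  end.
End Defs.
Arguments mpow {R} M m t.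


(* extended naturals option nat (None = infinity), with 0 * oo = 0 *)
Definition emul (x y : option nat) : option nat :=
  match x, y with
  | Some a, Some b => Some (a * b)%N
  | Some 0, None | None, Some 0 => Some 0%N
  | _, _ => None
  end.
Definition ele (x y : option nat) : Prop :=
  match x, y with
  | _, None => True
  | None, Some _ => False
  | Some a, Some b => (a <= b)%N
  end.

(* Pure tensors a ⊗ l vanish as soon as a ∈ m^t A (l is killed by some m^n and
   m^t A = m^(t+n) A) or l ∈ m^t L (move the powers of m across the tensor sign).
   A composition series of A / m^t A lifts to a filtration X_0 ⊆ ... ⊆ X_a = A with
   X_0 ⊆ m^t A, X_(j+1) = X_j + R x_j and m x_j ⊆ X_j, R being local.  The images T_j of
   X_j ⊗ L then filter A ⊗ L from 0 to everything, and T_(j+1) / T_j is an image of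
   L / mL under l |-> x_j ⊗ l; since len (L / mL) = len (k ⊗ L) = β_0(L), additivity of
   length gives len (A ⊗ L) <= a β_0(L).  The second bound is the same argument with A
   and L exchanged; the cases a = 0 or β_0 = 0 force A ⊗ L = 0. *)

From HB Require Import structures.
From mathcomp Require Import all_boot all_algebra zify.
From Stdlib Require Import ClassicalEpsilon FunctionalExtensionality PropExtensionality Classical.
Set Implicit Arguments. Unset Strict Implicit. Unset Printing Implicit Defensive.
Import GRing.Theory.
Local Open Scope ring_scope.

Section Submodules.
Variable R : comNzRingType.

Section SubmodTheory.
Variables (M : lmodType R) (S : M -> Prop).
Hypothesis hS : submod S.

Lemma submod0 : S 0. Proof. by case: hS. Qed.
Lemma submodD x y : S x -> S y -> S (x + y). Proof. by case: hS => _ + _; apply. Qed.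
Lemma submodZ r x : S x -> S (r *: x). Proof. by case: hS => _ _; apply. Qed.
Lemma submodN x : S x -> S (- x). Proof. by move=> Sx; rewrite -scaleN1r; apply: submodZ. Qed.
Lemma submodB x y : S x -> S y -> S (x - y).
Proof. by move=> Sx Sy; apply: submodD => //; apply: submodN. Qed.
End SubmodTheory.

Lemma submod0s (M : lmodType R) : submod (fun x : M => x = 0).
Proof. by split=> [|x y -> ->|r x ->]; rewrite ?addr0 ?scaler0. Qed.

Lemma submodT (M : lmodType R) : submod (fun _ : M => True).
Proof. by []. Qed.

Lemma submodI (M : lmodType R) (P Q : M -> Prop) :
  submod P -> submod Q -> submod (fun x => P x /\ Q x).
Proof.
move=> hP hQ; split; first by split; apply: submod0.
- by move=> x y [Px Qx] [Py Qy]; split; apply: submodD.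
- by move=> r x [Px Qx]; split; apply: submodZ.
Qed.

Definition sumset (M : lmodType R) (P Q : M -> Prop) (x : M) :=
  exists p q, [/\ P p, Q q & x = p + q].

Lemma submod_sumset (M : lmodType R) (P Q : M -> Prop) :
  submod P -> submod Q -> submod (sumset P Q).
Proof.
move=> hP hQ; split.
- by exists 0, 0; split; [apply: submod0 | apply: submod0 | rewrite addr0].
- move=> _ _ [p [q [Pp Qq ->]]] [p' [q' [Pp' Qq' ->]]].
  by exists (p + p'), (q + q'); split; [apply: submodD | apply: submodD | rewrite addrACA].
- move=> r _ [p [q [Pp Qq ->]]].
  by exists (r *: p), (r *: q); split; [apply: submodZ | apply: submodZ | rewrite scalerDr].
Qed.

Section LinearFun.
Variables (U V : lmodType R) (f : U -> V).
Hypothesis hf : linear f.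

Lemma lin0 : f 0 = 0.
Proof.
have := hf 1 0 0; rewrite scaler0 addr0 scale1r => f0.
by apply: (addrI (f 0)); rewrite addr0 -f0.
Qed.
Lemma linD x y : f (x + y) = f x + f y. Proof. by have := hf 1 x y; rewrite !scale1r. Qed.
Lemma linZ r x : f (r *: x) = r *: f x.
Proof. by have := hf r x 0; rewrite !addr0 lin0 addr0. Qed.
Lemma linB x y : f (x - y) = f x - f y.
Proof. by rewrite linD -scaleN1r linZ scaleN1r. Qed.

Lemma submod_preim (P : V -> Prop) : submod P -> submod (fun x => P (f x)).
Proof.
move=> hP; split; first by rewrite lin0; apply: submod0.
- by move=> x y Px Py; rewrite linD; apply: submodD.
- by move=> r x Px; rewrite linZ; apply: submodZ.
Qed.

Lemma submod_range : submod (fun z => exists x, z = f x).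
Proof.
split; first by exists 0; rewrite lin0.
- by move=> _ _ [x ->] [y ->]; exists (x + y); rewrite linD.
- by move=> r _ [x ->]; exists (r *: x); rewrite linZ.
Qed.

Lemma submod_img (P : U -> Prop) : submod P -> submod (fun z => exists x, P x /\ z = f x).
Proof.
move=> hP; split; first by exists 0; rewrite lin0; split=> //; apply: submod0.
- move=> _ _ [x [Px ->]] [y [Py ->]].
  by exists (x + y); rewrite linD; split=> //; apply: submodD.
- by move=> r _ [x [Px ->]]; exists (r *: x); rewrite linZ; split=> //; apply: submodZ.
Qed.
End LinearFun.

Definition span (M : lmodType R) (G : M -> Prop) (x : M) :=
  forall P, submod P -> subs G P -> P x.

Lemma submod_span (M : lmodType R) (G : M -> Prop) : submod (span G).
Proof.
split=> [P hP _|x y Gx Gy P hP GP|r x Gx P hP GP].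
- exact: submod0.
- by apply: (submodD hP); [exact: Gx | exact: Gy].
- by apply: (submodZ hP); exact: Gx.
Qed.

Lemma span_gen (M : lmodType R) (G : M -> Prop) x : G x -> span G x.
Proof. by move=> Gx P _; apply. Qed.

Lemma span_min (M : lmodType R) (G P : M -> Prop) :
  submod P -> subs G P -> subs (span G) P.
Proof. by move=> hP GP x; apply. Qed.

Section Prodset.
Variables (M : lmodType R) (I : R -> Prop).

Lemma prodset_min (N P : M -> Prop) :
  submod P -> (forall r x, I r -> N x -> P (r *: x)) -> subs (prodset I N) P.
Proof.
move=> hP hIN _ [s [hs ->]]; elim: s hs => [|p s IH] hs; first by rewrite big_nil; apply: submod0.
have [Ip Np] := hs p (or_introl erefl).
rewrite big_cons; apply: submodD => //; first exact: hIN.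
by apply: IH => q sq; apply: hs; right.
Qed.

Lemma prodset_gen (N : M -> Prop) r x : I r -> N x -> prodset I N (r *: x).
Proof.
move=> Ir Nx; exists [:: (r, x)]; rewrite big_seq1; split=> //.
by move=> p [<-|[]].
Qed.

Lemma prodset_mono (N N' : M -> Prop) : subs N N' -> subs (prodset I N) (prodset I N').
Proof.
move=> NN' x [s [hs ->]]; exists s; split=> // p sp.
by have [Ip Np] := hs p sp; split=> //; apply: NN'.
Qed.

Lemma submod_prodset (N : M -> Prop) : ideal I -> submod (prodset I N).
Proof.
case=> _ _ IM; split; first by exists [::]; rewrite big_nil.
- move=> _ _ [s1 [h1 ->]] [s2 [h2 ->]]; exists (s1 ++ s2); rewrite big_cat; split=> // p.
  by move=> sp; case: (List.in_app_or _ _ _ sp) => [/h1 | /h2].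
- move=> r _ [s [hs ->]]; exists [seq (r * p.1, p.2) | p <- s]; split.
    move=> q sq; case: (proj1 (List.in_map_iff _ _ _) sq) => p [<- sp].
    have [Ip Np] := hs p sp.
    by split=> //; apply: IM.
  by rewrite big_map scaler_sumr; apply: eq_bigr => p _; rewrite scalerA.
Qed.
End Prodset.

End Submodules.

Section Quotient.
Variables (R : comNzRingType) (M : lmodType R) (S : M -> Prop).
Hypothesis hS : submod S.

(* Each coset of [S] is represented by an element chosen by Hilbert's epsilon. *)
Definition qrepr (x : M) : M := epsilon (inhabits 0) (fun y => S (x - y)).

Lemma qrepr_rel x : S (x - qrepr x).
Proof.
apply: (epsilon_spec (inhabits 0) (fun y => S (x - y))).
by exists x; rewrite subrr; apply: submod0.
Qed.

Lemma qrepr_eq x y : S (x - y) -> qrepr x = qrepr y.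
Proof.
move=> Sxy; rewrite /qrepr; congr (epsilon _); apply: functional_extensionality => z.
apply: propositional_extensionality; split=> Sz.
- have -> : y - z = (x - z) - (x - y) by rewrite opprB [RHS]addrC addrA subrK.
  exact: submodB.
- have -> : x - z = (x - y) + (y - z) by rewrite addrA subrK.
  exact: submodD.
Qed.

Lemma qrepr_idem x : qrepr (qrepr x) = qrepr x.
Proof. by apply: qrepr_eq; rewrite -opprB; apply: submodN => //; apply: qrepr_rel. Qed.

Definition quot of submod S := {x : M | qrepr x == x}.
Local Notation Q := (quot hS).
HB.instance Definition _ := Choice.on Q.

Definition qproj (x : M) : Q := exist _ (qrepr x) (introT eqP (qrepr_idem x)).

Lemma qproj_val (q : Q) : qproj (val q) = q.
Proof. by apply: val_inj; case: q => x /= /eqP. Qed.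

Lemma quot_ind (P : Q -> Prop) : (forall x, P (qproj x)) -> forall q, P q.
Proof. by move=> Pproj q; rewrite -(qproj_val q). Qed.

Lemma qproj_eq x y : qproj x = qproj y <-> S (x - y).
Proof.
split=> [/(congr1 val) /= exy | Sxy]; last by apply: val_inj; apply: qrepr_eq.
have -> : x - y = (x - qrepr x) - (y - qrepr y) by rewrite exy opprB addrA subrK.
by apply: submodB => //; apply: qrepr_rel.
Qed.

Lemma qproj_rel x : S (x - val (qproj x)). Proof. exact: qrepr_rel. Qed.

Definition qadd (p q : Q) := qproj (val p + val q).
Definition qopp (q : Q) := qproj (- val q).
Definition qscale (r : R) (q : Q) := qproj (r *: val q).

Lemma qaddE x y : qadd (qproj x) (qproj y) = qproj (x + y).
Proof.
apply/qproj_eq.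
have -> : val (qproj x) + val (qproj y) - (x + y)
    = - ((x - val (qproj x)) + (y - val (qproj y))).
  by rewrite [RHS]opprD !opprB opprD addrACA.
by apply: submodN => //; apply: submodD => //; apply: qproj_rel.
Qed.

Lemma qoppE x : qopp (qproj x) = qproj (- x).
Proof. by apply/qproj_eq; rewrite opprK addrC; apply: qproj_rel. Qed.

Lemma qscaleE r x : qscale r (qproj x) = qproj (r *: x).
Proof.
apply/qproj_eq.
have -> : r *: val (qproj x) - r *: x = r *: - (x - val (qproj x)).
  by rewrite opprB scalerBr.
by apply: submodZ => //; apply: submodN => //; apply: qproj_rel.
Qed.

Lemma qaddA : associative qadd.
Proof. by elim/quot_ind=> x; elim/quot_ind=> y; elim/quot_ind=> z; rewrite !qaddE addrA. Qed.
Lemma qaddC : commutative qadd.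
Proof. by elim/quot_ind=> x; elim/quot_ind=> y; rewrite !qaddE addrC. Qed.
Lemma qadd0 : left_id (qproj 0) qadd.
Proof. by elim/quot_ind=> x; rewrite qaddE add0r. Qed.
Lemma qaddN : left_inverse (qproj 0) qopp qadd.
Proof. by elim/quot_ind=> x; rewrite qoppE qaddE addNr. Qed.
HB.instance Definition _ := GRing.isZmodule.Build Q qaddA qaddC qadd0 qaddN.

Lemma qscaleA a b v : qscale a (qscale b v) = qscale (a * b) v.
Proof. by elim/quot_ind: v => x; rewrite !qscaleE scalerA. Qed.
Lemma qscale1 : left_id 1 qscale.
Proof. by elim/quot_ind=> x; rewrite qscaleE scale1r. Qed.
Lemma qscaleDr : right_distributive qscale +%R.
Proof.
move=> a; elim/quot_ind=> x; elim/quot_ind=> y.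
by rewrite /GRing.add /= (qaddE x y) !qscaleE (qaddE (a *: x)) scalerDr.
Qed.
Lemma qscaleDl v : {morph qscale^~ v : a b / a + b}.
Proof. by elim/quot_ind: v => x a b; rewrite /GRing.add /= !qscaleE qaddE scalerDl. Qed.
HB.instance Definition _ :=
  GRing.Zmodule_isLmodule.Build R Q qscaleA qscale1 qscaleDr qscaleDl.

Lemma qproj_linear : linear qproj.
Proof. by move=> a x y; rewrite /GRing.add /= /GRing.scale /= qscaleE qaddE. Qed.

Lemma qproj_eq0 x : qproj x = 0 <-> S x.
Proof. by rewrite (_ : 0 = qproj 0) // qproj_eq subr0. Qed.
End Quotient.

Section RelativeChains.
Variables (R : comNzRingType) (M : lmodType R).
Implicit Types (P Q S : M -> Prop) (N W : nat -> M -> Prop).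

Definition proper_step N i := exists x, N i.+1 x /\ ~ N i x.

Definition rchain P Q n N :=
  (forall i, (i <= n)%N -> [/\ submod (N i), subs P (N i) & subs (N i) Q]) /\
  (forall i, (i < n)%N -> subs (N i) (N i.+1) /\ proper_step N i).

Definition has_rchain P Q n := exists N, rchain P Q n N.

(* [rlen_le P Q b]: the length of the subquotient [Q / P] is at most [b]. *)
Definition rlen_le P Q b := forall n, has_rchain P Q n -> (n <= b)%N.

Definition nat_of_prop (p : Prop) : nat := if excluded_middle_informative p then 1 else 0.

Fixpoint nproper W k : nat :=
  if k is k'.+1 then (nproper W k' + nat_of_prop (proper_step W k'))%N else 0.

Lemma rchain_of_increasing P Q W k :
  (forall i, (i <= k)%N -> [/\ submod (W i), subs P (W i) & subs (W i) Q]) ->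
  (forall i, (i < k)%N -> subs (W i) (W i.+1)) ->
  exists N, rchain P Q (nproper W k) N /\ same (N (nproper W k)) (W k).
Proof.
elim: k => [|k IH] hW Wincr.
  by exists W; split=> //; split=> // i; rewrite leqn0 => /eqP ->; apply: hW.
have [N [[hN Nincr] Nlast]] : exists N, rchain P Q (nproper W k) N /\ same (N (nproper W k)) (W k).
  by apply: IH => i hi; [apply: hW | apply: Wincr]; lia.
rewrite /= /nat_of_prop; case: excluded_middle_informative => [Wstep|Wflat] /=.
- set c := nproper W k.
  exists (fun i => if (i <= c)%N then N i else W k.+1); split; last by rewrite addn1 ltnn.
  split=> i hi; first by case: ifP => ic; [apply: hN | apply: hW]; lia.
  case: (ltnP i c) => [ic|ci]; first by rewrite /proper_step (ltnW ic) ic; apply: Nincr.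
  have -> : i = c by lia.
  rewrite /proper_step leqnn ltnn; split=> [x /Nlast|]; first exact: Wincr.
  by case: Wstep => x [Wx nWx]; exists x; split=> // /Nlast.
- exists N; rewrite addn0; split=> // x; split=> [/Nlast|Wx]; first exact: Wincr.
  by apply/Nlast; apply: NNPP => nNx; apply: Wflat; exists x.
Qed.

Lemma nproper_add W1 W2 k :
  (forall i, (i < k)%N -> proper_step W1 i \/ proper_step W2 i) ->
  (k <= nproper W1 k + nproper W2 k)%N.
Proof.
elim: k => [//|k IH] hstep /=.
have := IH (fun i hi => hstep i (ltnW hi)).
have : (1 <= nat_of_prop (proper_step W1 k) + nat_of_prop (proper_step W2 k))%N.
  rewrite /nat_of_prop; do 2 case: excluded_middle_informative => //.
  by case: (hstep k (ltnSn k)).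
lia.
Qed.

(* The modular law. *)
Lemma proper_step_meet_or_join Q N i :
  submod Q -> submod (N i) -> submod (N i.+1) -> subs (N i) (N i.+1) -> proper_step N i ->
  proper_step (fun j x => N j x /\ Q x) i \/ proper_step (fun j => sumset (N j) Q) i.
Proof.
move=> hQ hNi hNi1 Nincr [x [Nx nNx]]; apply: NNPP => /not_or_and [nmeet njoin].
have [a [c [Na Qc xE]]] : sumset (N i) Q x.
  apply: NNPP => nsum; apply: njoin; exists x; split=> //.
  by exists x, 0; split=> //; [apply: submod0 | rewrite addr0].
subst x.
have Nc : N i.+1 c.
  by rewrite -(addKr a c); apply: submodD => //; apply: submodN => //; apply: Nincr.
have {}Nc : N i c by apply: NNPP => nNc; apply: nmeet; exists c; split=> [|[]].
by apply: nNx; apply: submodD.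
Qed.

Lemma has_rchain_split P Q S n :
  submod Q -> submod S -> subs P Q -> subs Q S -> has_rchain P S n ->
  exists n1 n2, [/\ (n <= n1 + n2)%N, has_rchain P Q n1 & has_rchain Q S n2].
Proof.
move=> hQ hS PQ QS [N [hN Nincr]].
set W1 := fun i x => N i x /\ Q x.
set W2 := fun i => sumset (N i) Q.
have [N1 [chain1 _]] : exists N1, rchain P Q (nproper W1 n) N1 /\ same (N1 (nproper W1 n)) (W1 n).
  apply: rchain_of_increasing => [i /hN [hNi PN NS]|i /Nincr [NN _] x [Nx Qx]].
    by split; [exact: submodI | move=> x Px; split; [apply: PN | apply: PQ] | move=> x []].
  by split=> //; apply: NN.
have [N2 [chain2 _]] : exists N2, rchain Q S (nproper W2 n) N2 /\ same (N2 (nproper W2 n)) (W2 n).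
  apply: rchain_of_increasing => [i /hN [hNi PN NS]|i /Nincr [NN _] _ [a [c [Na Qc ->]]]].
    split; first exact: submod_sumset.
      by move=> x Qx; exists 0, x; split=> //; [apply: submod0 | rewrite add0r].
    by move=> _ [a [c [Na Qc ->]]]; apply: submodD => //; [apply: NS | apply: QS].
  by exists a, c; split=> //; apply: NN.
exists (nproper W1 n), (nproper W2 n); split; [|by exists N1 | by exists N2].
apply: nproper_add => i lt_in; have [NN Nstep] := Nincr i lt_in.
have [hNi _ _] := hN i (ltnW lt_in); have [hNi1 _ _] := hN i.+1 lt_in.
exact: proper_step_meet_or_join.
Qed.

Lemma rlen_le_add P Q S b1 b2 :
  submod Q -> submod S -> subs P Q -> subs Q S ->
  rlen_le P Q b1 -> rlen_le Q S b2 -> rlen_le P S (b1 + b2).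
Proof.
move=> hQ hS PQ QS le1 le2 n /(has_rchain_split hQ hS PQ QS) [n1 [n2 [le_n c1 c2]]].
by have := le1 _ c1; have := le2 _ c2; lia.
Qed.

Lemma rlen_le_refl P : rlen_le P P 0.
Proof.
move=> [//|n] [N [hN Nincr]]; have [_ [x [N1x nN0x]]] := Nincr 0%N erefl.
have [_ _ N1P] := hN 1%N erefl; have [_ PN0 _] := hN 0%N erefl.
by case: nN0x; apply/PN0/N1P.
Qed.
End RelativeChains.

Section Length.
Variable R : comNzRingType.

Lemma len_Some (M : lmodType R) b :
  len M = Some b -> has_chain M b /\ forall k, has_chain M k -> (k <= b)%N.
Proof.
rewrite /len; case: excluded_middle_informative => // H [<-].
exact: (proj2_sig (constructive_indefinite_description _ H)).
Qed.

Lemma has_chain0 (M : lmodType R) : has_chain M 0.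
Proof. by exists (fun _ x => x = 0); split=> // i _; apply: submod0s. Qed.

Lemma len_le_of_chain_bound (M : lmodType R) b :
  (forall k, has_chain M k -> (k <= b)%N) -> exists a, len M = Some a /\ (a <= b)%N.
Proof.
move=> hb; rewrite /len; case: excluded_middle_informative => [H|nomax].
  exists (proj1_sig (constructive_indefinite_description _ H)); split=> //.
  by apply/hb/(proj1 (proj2_sig (constructive_indefinite_description _ H))).
have longer n : has_chain M n -> exists k, has_chain M k /\ (n < k)%N.
  move=> cn; apply: NNPP => nolonger; apply: nomax; exists n; split=> // k ck.
  by apply: NNPP => nkn; apply: nolonger; exists k; split=> //; lia.
have unbounded i : exists k, has_chain M k /\ (i <= k)%N.
  elim: i => [|i [k [ck ik]]]; first by exists 0%N; split=> //; apply: has_chain0.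
  by have [k' [ck' kk']] := longer k ck; exists k'; split=> //; lia.
by have [k [ck bk]] := unbounded b.+1; have := hb k ck; lia.
Qed.

Lemma ele_len_of_chain_bound (M : lmodType R) b :
  (forall k, has_chain M k -> (k <= b)%N) -> ele (len M) (Some b).
Proof. by case/len_le_of_chain_bound => a [->]. Qed.

Lemma len_trivial (M : lmodType R) : (forall x : M, x = 0) -> len M = Some 0%N.
Proof.
move=> M0; have [a [-> a0]] : exists a, len M = Some a /\ (a <= 0)%N.
  apply: len_le_of_chain_bound => -[//|k] [N [hN Nincr]].
  have [_ [x [_ nN0x]]] := Nincr 0%N erefl.
  by case: nN0x; rewrite (M0 x); apply: submod0; apply: hN.
by case: a a0.
Qed.

(* [P] becomes the [p]-th member of the longer chain. *)
Lemma has_chain_insert (M : lmodType R) a (N : nat -> M -> Prop) (P : M -> Prop) p :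
  (forall i, (i <= a)%N -> submod (N i)) ->
  (forall i, (i < a)%N -> subs (N i) (N i.+1) /\ exists x, N i.+1 x /\ ~ N i x) ->
  submod P -> (p <= a.+1)%N ->
  ((0 < p)%N -> subs (N p.-1) P /\ exists x, P x /\ ~ N p.-1 x) ->
  ((p <= a)%N -> subs P (N p) /\ exists x, N p x /\ ~ P x) ->
  has_chain M a.+1.
Proof.
move=> hN Nincr hP pa below above.
exists (fun i => if (i < p)%N then N i else if i == p then P else N i.-1); split.
  by move=> i hi /=; case: ltngtP => ip //; apply: hN; lia.
move=> i hi.
have [ip|pi] := ltnP i.+1 p; first by rewrite (ltnW ip); apply: Nincr; lia.
have [ip|ne] := eqVneq i.+1 p; first by subst p; rewrite ltnSn; apply: below.
have le_pi : (p <= i)%N by move/eqP: ne; lia.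
rewrite ltnNge le_pi /=.
have [ip|ne'] := eqVneq i p; first by subst i; apply: above; lia.
have -> : i = i.-1.+1 by move/eqP: ne'; lia.
by apply: Nincr; lia.
Qed.
End Length.

Section MaximalChain.
Variables (R : comNzRingType) (M : lmodType R) (a : nat) (N : nat -> M -> Prop).
Hypothesis hN : forall i, (i <= a)%N -> submod (N i).
Hypothesis Nincr :
  forall i, (i < a)%N -> subs (N i) (N i.+1) /\ exists x, N i.+1 x /\ ~ N i x.
Hypothesis Nmax : forall k, has_chain M k -> (k <= a)%N.

Lemma maxchain_no_insert P p :
  submod P -> (p <= a.+1)%N ->
  ((0 < p)%N -> subs (N p.-1) P /\ exists x, P x /\ ~ N p.-1 x) ->
  ((p <= a)%N -> subs P (N p) /\ exists x, N p x /\ ~ P x) -> False.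
Proof. by move=> hP pa below above; have := Nmax (has_chain_insert hN Nincr hP pa below above); lia. Qed.

Lemma maxchain_bottom x : N 0 x -> x = 0.
Proof.
move=> N0x; apply: NNPP => nx0.
apply: (@maxchain_no_insert (fun x => x = 0) 0) => // [|_]; first exact: submod0s.
by split=> [_ ->|]; [apply: submod0; apply: hN | exists x].
Qed.

Lemma maxchain_top x : N a x.
Proof.
apply: NNPP => nNx; apply: (@maxchain_no_insert (fun _ => True) a.+1) => //.
  by move=> _; split=> //; exists x.
by rewrite ltnn.
Qed.

Lemma maxchain_step_simple j P : (j < a)%N -> submod P ->
  subs (N j) P -> subs P (N j.+1) -> (exists x, P x /\ ~ N j x) -> subs (N j.+1) P.
Proof.
move=> ja hP NP PN Pnew x Nx; apply: NNPP => nPx.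
apply: (@maxchain_no_insert P j.+1) => //; first exact: ltnW.
by move=> _; split=> //; exists x.
Qed.

Lemma maxchain_step_cyclic j y : (j < a)%N -> N j.+1 y -> ~ N j y ->
  forall x, N j.+1 x -> exists n r, N j n /\ x = n + r *: y.
Proof.
move=> ja Ny nNy; have hNj : submod (N j) by apply: hN; lia.
apply: maxchain_step_simple => //.
- split; first by exists 0, 0; rewrite scale0r addr0; split=> //; apply: submod0.
  + move=> _ _ [n [r [Nn ->]]] [n' [r' [Nn' ->]]]; exists (n + n'), (r + r').
    by rewrite scalerDl addrACA; split=> //; apply: submodD.
  + move=> s _ [n [r [Nn ->]]]; exists (s *: n), (s * r).
    by rewrite scalerDr scalerA; split=> //; apply: submodZ.
- by move=> x Nx; exists x, 0; rewrite scale0r addr0.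
- move=> _ [n [r [Nn ->]]]; apply: (submodD (hN ja)); last exact: (submodZ (hN ja)).
  by apply: (proj1 (Nincr ja)).
- exists y; split=> //; exists 0, 1; rewrite scale1r add0r; split=> //; exact: submod0.
Qed.

(* The annihilator of the simple factor [N_(j+1) / N_j], generated by [y]. *)
Lemma maxchain_step_annihilator_maximal j y : (j < a)%N -> N j.+1 y -> ~ N j y ->
  maximal_ideal (fun r => N j (r *: y)).
Proof.
move=> ja Ny nNy; have hNj : submod (N j) by apply: hN; lia.
have hJ : ideal (fun r => N j (r *: y)).
  split; first by rewrite scale0r; apply: submod0.
    by move=> r s Nr Ns; rewrite scalerDl; apply: submodD.
  by move=> r s Ns; rewrite -scalerA; apply: submodZ.
split=> // [|K [_ KD KM] JK]; first by rewrite scale1r.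
have [[c [Kc nJc]]|Kold] := classic (exists c, K c /\ ~ N j (c *: y)); last first.
  by left=> x; split=> [Kx|/JK //]; apply: NNPP => nx; apply: Kold; exists x.
right; have Ncy : N j.+1 (c *: y) by apply: submodZ => //; apply: hN.
have [n [d [Nn yE]]] := maxchain_step_cyclic ja Ncy nJc Ny.
have J1dc : N j ((1 - d * c) *: y).
  by rewrite scalerBl scale1r -scalerA {1}yE addrK.
by rewrite -(subrK (d * c) 1); apply: KD; [apply: JK | apply: KM].
Qed.
End MaximalChain.

Section CompositionSeries.
Variables (R : comNzRingType) (m : R -> Prop).
Hypothesis hloc : local_with m.

(* A filtration of [X] starting inside [K] whose successive quotients are [0] or [R/m]. *)
Definition simple_filtration (X : lmodType R) (K : X -> Prop) a
    (Xs : nat -> X -> Prop) (xs : nat -> X) :=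
  [/\ subs (Xs 0%N) K, forall x, Xs a x,
      forall j, (j < a)%N -> forall x, Xs j.+1 x -> exists y r, Xs j y /\ x = y + r *: xs j,
      forall j, (j < a)%N -> forall r, m r -> Xs j (r *: xs j)
    & forall j, (j < a)%N -> subs (Xs j) (Xs j.+1)].

Lemma composition_series (Q : lmodType R) a : len Q = Some a ->
  exists N xb, simple_filtration (fun x : Q => x = 0) a N xb.
Proof.
case/len_Some=> -[N [hN Nincr]] Nmax.
pose xb j := epsilon (inhabits (0 : Q)) (fun x => N j.+1 x /\ ~ N j x).
have hxb j : (j < a)%N -> N j.+1 (xb j) /\ ~ N j (xb j).
  move=> ja; apply: (epsilon_spec (inhabits (0 : Q)) (fun x => N j.+1 x /\ ~ N j x)).
  by case: (Nincr j ja).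
exists N, xb; split.
- by move=> x; apply: (maxchain_bottom hN Nincr Nmax).
- exact: (maxchain_top hN Nincr Nmax).
- move=> j ja; have [Nxb nNxb] := hxb j ja.
  exact: (maxchain_step_cyclic hN Nincr Nmax ja Nxb nNxb).
- move=> j ja r mr; have [Nxb nNxb] := hxb j ja.
  have Jmax := maxchain_step_annihilator_maximal hN Nincr Nmax ja Nxb nNxb.
  by case: hloc => _ /(_ _ Jmax r) [_]; apply.
- by move=> j /Nincr [].
Qed.

Lemma quotient_filtration (X Q : lmodType R) (p : X -> Q) (K : X -> Prop) a :
  is_quotient p K -> len Q = Some a -> exists Xs xs, simple_filtration K a Xs xs.
Proof.
case=> hp psurj pker /composition_series [N [xb [N0 Na Nstep Nm Nincr]]].
pose xs j := epsilon (inhabits (0 : X)) (fun x => p x = xb j).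
have pxs j : p (xs j) = xb j.
  by apply: (epsilon_spec (inhabits (0 : X)) (fun x => p x = xb j)); apply: psurj.
exists (fun j x => N j (p x)), xs; split.
- by move=> x /N0 /pker.
- by move=> x; apply: Na.
- move=> j ja x /(Nstep j ja) [n [r [Nn pxE]]]; exists (x - r *: xs j), r.
  by rewrite subrK linB // linZ // pxs pxE addrK.
- by move=> j ja r mr; rewrite linZ // pxs; apply: Nm.
- by move=> j ja x; apply: Nincr.
Qed.
End CompositionSeries.

Section Tensor.
Variable R : comNzRingType.

Definition pure_tensors (A L T : lmodType R) (b : A -> L -> T) (t : T) :=
  exists a l, t = b a l.

(* Both the zero map and the projection onto [T / span(pure tensors)] factor the zero
   bilinear map, so uniqueness forces the projection to vanish. *)
Lemma tensor_span (A L T : lmodType R) (b : A -> L -> T) :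
  is_tensor b -> forall t, span (pure_tensors b) t.
Proof.
move=> [_ univ] t; have hS := submod_span (pure_tensors b).
have bil0 : bilinear_map (fun (a : A) (l : L) => 0 : quot hS).
  by split=> ? ? ? ?; rewrite scaler0 addr0.
have [g [_ _ unique]] := univ _ _ bil0.
have proj_g : forall x, qproj hS x = g x.
  apply: unique; first exact: qproj_linear.
  by move=> a l; apply/qproj_eq0; apply: span_gen; exists a, l.
have zero_g : forall x, 0 = g x.
  by apply: unique => // ? ? ?; rewrite scaler0 addr0.
by apply/(qproj_eq0 hS); rewrite proj_g -zero_g.
Qed.

Lemma bilinear_map_flip (A L T : lmodType R) (b : A -> L -> T) :
  bilinear_map b -> bilinear_map (fun l a => b a l).
Proof. by case. Qed.

Lemma span_pure_tensors_flip (A L T : lmodType R) (b : A -> L -> T) :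
  (forall t, span (pure_tensors b) t) -> forall t, span (pure_tensors (fun l a => b a l)) t.
Proof.
move=> spanb t P hP flipP; apply: spanb => // _ [a [l ->]].
by apply: flipP; exists l, a.
Qed.

Lemma rlen_le_pullback (Y T : lmodType R) (psi : Y -> T) (G : Y -> Prop) (T0 T1 : T -> Prop) b :
  linear psi -> (forall y, G y -> T0 (psi y)) ->
  subs T1 (sumset T0 (fun t => exists y, t = psi y)) ->
  rlen_le G (fun _ => True) b -> rlen_le T0 T1 b.
Proof.
move=> hpsi GT0 T1sum Gle n [N [hN Nincr]]; apply: Gle.
exists (fun i y => N i (psi y)); split.
  move=> i /hN [hNi T0N NT1]; split=> //; first exact: submod_preim.
  by move=> y /GT0 /T0N.
move=> i lt_in; have [NN [x [N1x nN0x]]] := Nincr i lt_in; split=> [y|]; first exact: NN.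
have [hN1 T0N1 N1T1] := hN i.+1 lt_in; have [hN0 T0N0 _] := hN i (ltnW lt_in).
have [t0 [_ [T0t0 [y ->] xE]]] := T1sum x (N1T1 x N1x).
exists y; split.
  by rewrite -(addKr t0 (psi y)) -xE; apply: submodD => //; apply: submodN => //; apply: T0N1.
by move=> N0y; apply: nN0x; rewrite xE; apply: submodD => //; apply: T0N0.
Qed.

Lemma rlen_le_of_kernel (Y K : lmodType R) (phi : Y -> K) (G : Y -> Prop) b :
  linear phi -> submod G -> (forall y, phi y = 0 -> G y) ->
  (forall k, has_chain K k -> (k <= b)%N) -> rlen_le G (fun _ => True) b.
Proof.
move=> hphi hG kerG Kle n [N [hN Nincr]]; apply: Kle.
exists (fun i z => exists y, N i y /\ z = phi y); split.
  by move=> i /hN [hNi _ _]; apply: submod_img.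
move=> i lt_in; have [NN [x [N1x nN0x]]] := Nincr i lt_in; split.
  by move=> _ [y [Ny ->]]; exists y; split=> //; apply: NN.
have [hN0 GN0 _] := hN i (ltnW lt_in).
exists (phi x); split=> [|[y [N0y exy]]]; first by exists x.
apply: nN0x; rewrite -(subrK y x); apply: submodD => //; apply: GN0; apply: kerG.
by rewrite linB // exy subrr.
Qed.
End Tensor.

Section Residue.
Variables (R : comNzRingType) (m : R -> Prop).
Hypothesis hm : ideal m.

(* [k ⊗ Y -> Y / mY] is well defined, and sends [pk 1 ⊗ y] to the class of [y]. *)
Lemma tensor_residue_kernel (Y k KY : lmodType R) (pk : R^o -> k) (bY : k -> Y -> KY) :
  is_quotient pk m -> is_tensor bY ->
  forall y, bY (pk 1) y = 0 -> prodset m (fun _ : Y => True) y.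
Proof.
move=> [hpk psurj pker] [_ univ] y b0.
have hS := submod_prodset (fun _ : Y => True) hm.
pose sg (c : k) : R^o := epsilon (inhabits 0) (fun r : R^o => pk r = c).
have pk_sg c : pk (sg c) = c.
  by apply: (epsilon_spec (inhabits 0) (fun r : R^o => pk r = c)); apply: psurj.
have scale_mod r s x : m (r - s) -> r *: qproj hS x = s *: qproj hS x.
  move=> mrs; rewrite -(subrK s r) scalerDl -(linZ (qproj_linear hS)).
  by rewrite (proj2 (qproj_eq0 hS _)) ?add0r //; apply: prodset_gen.
have bilf : bilinear_map (fun c x => (sg c : R) *: qproj hS x).
  split=> [z a c c'|c a z z'] /=.
    have m_diff : m (sg (a *: c + c') - (a * sg c + sg c')).
      apply/pker; rewrite (linB hpk) (linD hpk).
      by rewrite -[pk (_ * _)]/(pk (a *: sg c)) (linZ hpk) !pk_sg subrr.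
    by rewrite (scale_mod _ _ _ m_diff) scalerDl scalerA.
  by rewrite (qproj_linear hS) scalerDr !scalerA mulrC.
have [g [hg gb _]] := univ _ _ bilf.
apply/(qproj_eq0 hS); rewrite -[qproj hS y]scale1r -(scale_mod (sg (pk 1))).
  by rewrite -gb b0 (lin0 hg).
by apply/pker; rewrite linB // pk_sg subrr.
Qed.

Lemma rlen_le_residue (Y k KY : lmodType R) (pk : R^o -> k) (bY : k -> Y -> KY) b :
  is_quotient pk m -> is_tensor bY -> len KY = Some b ->
  rlen_le (prodset m (fun _ : Y => True)) (fun _ => True) b.
Proof.
move=> hk hKY /len_Some [_ KYle].
apply: (rlen_le_of_kernel (phi := bY (pk 1))) => //.
- by case: hKY => -[_ hb2] _; apply: hb2.
- exact: submod_prodset.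
- exact: (tensor_residue_kernel hk hKY).
Qed.
End Residue.

Section FiltrationBound.
Variables (R : comNzRingType) (m : R -> Prop) (X Y T : lmodType R) (b : X -> Y -> T).
Variables (K : X -> Prop) (a be : nat) (Xs : nat -> X -> Prop) (xs : nat -> X).
Hypothesis hb : bilinear_map b.
Hypothesis spanb : forall t, span (pure_tensors b) t.
Hypothesis Kb : forall x y, K x -> b x y = 0.
Hypothesis hXs : simple_filtration m K a Xs xs.
Hypothesis Yle : rlen_le (prodset m (fun _ : Y => True)) (fun _ => True) be.

Let Tj j := span (fun t => exists x y, Xs j x /\ t = b x y).

(* [Tj (j+1) / Tj j] is an image of [Y / mY] under [y |-> b (xs j) y]. *)
Lemma filtration_step_bound j : (j < a)%N -> rlen_le (Tj j) (Tj j.+1) be.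
Proof.
case: hXs => _ _ Xstep Xm _; case: hb => hb1 hb2 ja.
have hT := submod_span (fun t => exists x y, Xs j x /\ t = b x y).
apply: (rlen_le_pullback (hb2 (xs j)) _ _ Yle).
- apply: prodset_min => [|r y mr _]; first exact: submod_preim.
  rewrite /= (linZ (hb2 _)) -(linZ (hb1 y)).
  by apply: span_gen; exists (r *: xs j), y; split=> //; apply: Xm.
- apply: (span_min (submod_sumset hT (submod_range (hb2 (xs j))))).
  move=> _ [x [y [/(Xstep j ja) [x' [r [Xx' ->]]] ->]]].
  exists (b x' y), (b (xs j) (r *: y)); split; first by apply: span_gen; exists x', y.
    by exists (r *: y).
  by rewrite (linD (hb1 y)) (linZ (hb1 y)) (linZ (hb2 _)).
Qed.

Lemma filtration_bottom t : Tj 0 t -> t = 0.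
Proof.
case: hXs => X0 _ _ _ _; apply: (span_min (submod0s T)) => _ [x [y [/X0 Kx ->]]].
exact: Kb.
Qed.

Lemma filtration_prefix_bound j : (j <= a)%N -> rlen_le (Tj 0) (Tj j) (j * be).
Proof.
case: hXs => _ _ _ _ Xincr; have hT i : submod (Tj i) by apply: submod_span.
elim: j => [_|j IH ja]; first exact: rlen_le_refl.
rewrite mulSnr; apply: (rlen_le_add (hT j) (hT j.+1)).
- by move=> t /filtration_bottom ->; apply: submod0.
- apply: (span_min (hT j.+1)) => _ [x [y [Xx ->]]].
  by apply: span_gen; exists x, y; split=> //; apply: Xincr.
- by apply: IH; apply: ltnW.
- exact: filtration_step_bound.
Qed.

Lemma filtration_len_bound k : has_chain T k -> (k <= a * be)%N.
Proof.
case: hXs => _ Xa _ _ _ [N [hN Nincr]].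
apply: (filtration_prefix_bound (leqnn a)); exists N; split=> // i /hN hNi.
split=> // [t /filtration_bottom ->|t _]; first exact: submod0.
apply: (@spanb t _ (submod_span _)) => _ [x [y ->]].
by apply: span_gen; exists x, y.
Qed.
End FiltrationBound.

Section Annihilation.
Variables (R : comNzRingType) (m : R -> Prop).

Lemma mpow_addl (X : lmodType R) j n : subs (mpow X m (j + n)) (mpow X m n).
Proof. by elim: n => [//|n IH]; rewrite addnS; apply: prodset_mono. Qed.

Lemma mpow_stable (X : lmodType R) t : same (mpow X m t) (mpow X m t.+1) ->
  forall j, subs (mpow X m t) (mpow X m (t + j)).
Proof.
move=> stab; elim=> [|j IH]; first by rewrite addn0.
by rewrite addnS => x /stab; apply: prodset_mono.
Qed.

Lemma mpow_full (X : lmodType R) : (forall x, mpow X m 1 x) -> forall j x, mpow X m j x.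
Proof.
move=> full1; elim=> [//|j IH] x.
exact: (prodset_mono (N := fun _ => True) (fun x _ => IH x) (full1 x)).
Qed.

Variables (A L T : lmodType R) (b : A -> L -> T).
Hypothesis hb : bilinear_map b.

Lemma bilinear_torsion_vanish n l : (forall r, ipow m n r -> r *: l = 0) ->
  forall a, mpow A m n a -> b a l = 0.
Proof.
case: hb => hb1 hb2; elim: n l => [|n IH] l ml0 a.
  by rewrite -(scale1r l) ml0 // (lin0 (hb2 a)).
apply: (prodset_min (submod_preim (hb1 l) (submod0s T))) => r {}a mr ma /=.
rewrite (linZ (hb1 l)) -(linZ (hb2 a)); apply: IH ma => s ms.
by rewrite scalerA mulrC; apply: ml0; apply: (prodset_gen (M := R^o)).
Qed.

(* Move one factor of [m] at a time from [L] to [A]. *)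
Lemma bilinear_vanish_transfer n j : (forall a l, mpow A m (j + n) a -> b a l = 0) ->
  forall a l, mpow A m j a -> mpow L m n l -> b a l = 0.
Proof.
case: hb => hb1 hb2; elim: n j => [|n IH] j vanish a l ma.
  by rewrite addn0 in vanish; move=> _; apply: vanish.
apply: (prodset_min (submod_preim (hb2 a) (submod0s T))) => r {}l mr ml /=.
rewrite (linZ (hb2 a)) -(linZ (hb1 l)); apply: (IH j.+1) ml.
  by move=> a' l'; rewrite addSnnS; apply: vanish.
exact: prodset_gen.
Qed.
End Annihilation.

Lemma rlen_le0_sub (R : comNzRingType) (M : lmodType R) (P Q : M -> Prop) :
  submod P -> submod Q -> subs P Q -> rlen_le P Q 0 -> subs Q P.
Proof.
move=> hP hQ PQ le0 y Qy; apply: NNPP => nPy.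
have : has_rchain P Q 1.
  exists (fun i => if i == 0%N then P else Q).
  by split=> [[|[|i]] // _|[|i] // _]; split=> //; exists y.
by move/le0.
Qed.

Lemma emul_Some a b : emul (Some a) (Some b) = Some (a * b)%N.
Proof. by case: a. Qed.

Lemma emulC x y : emul x y = emul y x.
Proof. by case: x y => [[|a]|] [[|b]|] //=; rewrite mulnC. Qed.

Section TensorLength.
Variables (R : comNzRingType) (m : R -> Prop).
Hypothesis hloc : local_with m.

Lemma tensor_len_le (X Y T QX k KY : lmodType R) (b : X -> Y -> T) (pX : X -> QX)
    (pk : R^o -> k) (bY : k -> Y -> KY) n :
  bilinear_map b -> (forall t, span (pure_tensors b) t) ->
  (forall x y, mpow X m n x -> b x y = 0) -> (forall x y, mpow Y m n y -> b x y = 0) ->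
  is_quotient pk m -> is_quotient pX (mpow X m n) -> is_tensor bY ->
  ele (len T) (emul (len QX) (len KY)).
Proof.
move=> hb spanb vanX vanY hk hQX hKY.
have hm : ideal m by case: hloc => -[].
have b_zero : (forall x y, b x y = 0) -> forall z, ele (len T) z.
  move=> b0 z; rewrite len_trivial; first by case: z.
  by move=> t; apply: (@spanb t _ (submod0s T)) => _ [x [y ->]].
case hQ: (len QX) => [a|]; case hK: (len KY) => [be|].
- have [Xs [xs hXs]] := quotient_filtration hloc hQX hQ.
  rewrite emul_Some; apply: ele_len_of_chain_bound => j.
  exact: (filtration_len_bound hb spanb vanX hXs (rlen_le_residue hm hk hKY hK)).
- case: a hQ => [|a] hQ; last by case: (len T).
  have [Xs [xs [X0 Xa _ _ _]]] := quotient_filtration hloc hQX hQ.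
  by apply: b_zero => x y; apply: vanX; apply: X0.
- case: be hK => [|be] hK; last by case: (len T).
  have Yle0 := rlen_le_residue hm hk hKY hK.
  have mY := rlen_le0_sub (submod_prodset _ hm) (submodT Y) (fun _ _ => I) Yle0.
  by apply: b_zero => x y; apply: vanY; apply: mpow_full => z; apply: mY.
- by case: (len T).
Qed.
End TensorLength.

Theorem theorem3p8 (R : comNzRingType) (m : R -> Prop) (A L : lmodType R) (t : nat) :
  noetherian_ring R -> local_with m ->
  artinian A -> mtorsion m L ->
  same (mpow A m t) (mpow A m t.+1) ->
  forall (k : lmodType R) (pk : R^o -> k), is_quotient pk m ->
  forall (T : lmodType R) (b : A -> L -> T), is_tensor b ->
  forall (QA : lmodType R) (pA : A -> QA), is_quotient pA (mpow A m t) ->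
  forall (QL : lmodType R) (pL : L -> QL), is_quotient pL (mpow L m t) ->
  forall (KA : lmodType R) (bA : k -> A -> KA), is_tensor bA ->
  forall (KL : lmodType R) (bL : k -> L -> KL), is_tensor bL ->
  ele (len T) (emul (len QA) (len KL)) /\
  ele (len T) (emul (len KA) (len QL)).
Proof.
move=> _ hloc _ htor hstab k pk hk T b hT QA pA hQA QL pL hQL KA bA hKA KL bL hKL.
have hb := proj1 hT; have spanb := tensor_span hT.
have vanA a l : mpow A m t a -> b a l = 0.
  move=> ma; have [n ml0] := htor l; apply: (bilinear_torsion_vanish hb ml0).
  by apply: (mpow_addl (j := t)); apply: mpow_stable.
have vanL a l : mpow L m t l -> b a l = 0.
  by apply: (bilinear_vanish_transfer hb (j := 0)) => // a' l'; rewrite add0n; apply: vanA.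
split; first exact: (tensor_len_le hloc hb spanb vanA vanL hk hQA hKL).
rewrite emulC; apply: (tensor_len_le hloc (bilinear_map_flip hb) (span_pure_tensors_flip spanb)
  (fun l a => vanL a l) (fun l a => vanA a l) hk hQL hKA).
Qed.
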